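(* Every finite distributive lattice $L$ with more than one element can be generated from the one-element lattice $\mathbf{1}$ by finitely many expansions $\boxplus$: there are lattices $L_0\cong\mathbf{1},L_1,\dots,L_m$ with $L_m\cong L$ such that for each $i\ge1$, $L_i=L_{i-1}\boxplus K_i$ for some cutting $K_i$ of $L_{i-1}$.
   Context: For a finite poset $P$, $\mathcal{F}(P)$ is the set of filters (up-sets) of $P$ ordered by reverse inclusion; it is a finite distributive lattice with least element $P$ and greatest element $\emptyset$, and $\mathcal{F}(\emptyset)$ is the one-element lattice. Every finite distributive lattice is isomorphic to some $\mathcal{F}(P)$. A cutting of a finite distributive lattice $L$ is an interval $K=[\hat0_K,\hat1_K]$ of $L$ such that every maximal chain of $L$ meets $K$. For a cutting $K$ of $L=\mathcal{F}(P)$, let $S=\hat0_K\setminus\hat1_K$, $S_0$ the set of maximal elements of $P\setminus\hat0_K$, $S_1$ the set of minimal elements of $\hat1_K$. The poset $P_K$ is $P\cup\{x_K\}$ ($x_K$ new) where the order on $P$ is unchanged, $z<x_K$ iff $z\le s$ for some $s\in S_0$, $x_K<y$ iff $y\ge s$ for some $s\in S_1$, and $x_K$ is incomparable to every element of $S$. The convex expansion is $L\boxplus K:=\mathcal{F}(P_K)$. *)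

From HB Require Import structures.
From mathcomp Require Import all_boot all_order.
Set Implicit Arguments. Unset Strict Implicit. Unset Printing Implicit Defensive.

Section Filters.
Variables (n : nat) (le : rel 'I_n).

Definition plt (x y : 'I_n) : bool := (x != y) && le x y.

Definition is_filter (F : {set 'I_n}) : bool :=
  [forall x, forall y, ((x \in F) && le x y) ==> (y \in F)].

(* order of the lattice F(P): reverse inclusion *)
Definition Fle (A B : {set 'I_n}) : bool := B \subset A.

Definition is_chain (C : {set {set 'I_n}}) : bool :=
  [forall A in C, is_filter A] &&
  [forall A in C, forall B in C, Fle A B || Fle B A].

Definition is_max_chain (C : {set {set 'I_n}}) : bool :=
  is_chain C && [forall C', (is_chain C' && (C \subset C')) ==> (C' == C)].

(* cutting K = [a, b] of F(P) (a = bottom of K, b = top of K) *)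
Definition is_cutting (a b : {set 'I_n}) : bool :=
  [&& is_filter a, is_filter b, Fle a b &
   [forall C, is_max_chain C ==>
      [exists F in C, Fle a F && Fle F b]]].

Definition S0 (a : {set 'I_n}) : {set 'I_n} :=
  [set x | (x \notin a) && [forall y, (y \notin a) ==> ~~ plt x y]].
Definition S1 (b : {set 'I_n}) : {set 'I_n} :=
  [set x | (x \in b) && [forall y, (y \in b) ==> ~~ plt y x]].

(* The poset P_K on 'I_n.+1, with the new element x_K = ord_max. *)
Definition expand (a b : {set 'I_n}) : rel 'I_n.+1 :=
  fun i j =>
    match unlift ord_max i, unlift ord_max j with
    | Some i', Some j' => le i' j'
    | Some i', None => [exists s in S0 a, le i' s]
    | None, Some j' => [exists s in S1 b, le s j']
    | None, None => true
    end.

End Filters.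

(* generated n le : the lattice F(P) for P = ('I_n, le) is L_m in a sequence
   L_0 = F(empty) (one element), L_i = L_{i-1} [+] K_i with K_i a cutting. *)
Inductive generated : forall n, rel 'I_n -> Prop :=
  | gen0 (le : rel 'I_0) : generated le
  | genS n (le : rel 'I_n) (a b : {set 'I_n}) :
      generated le -> is_cutting le a b -> generated (expand le a b).

(* L is isomorphic (as an ordered set, hence as a lattice) to F(P) *)
Definition iso_to_filters (d : Order.disp_t) (L : finPOrderType d)
  (n : nat) (le : rel 'I_n) : Prop :=
  exists f : L -> {set 'I_n},
    [/\ injective f,
        forall x, is_filter le (f x),
        forall F, is_filter le F -> exists x, f x = F &
        forall x y, (x <= y)%O = Fle (f x) (f y)].

(* By Birkhoff's representation, L is isomorphic to the lattice of filters of
   its poset J of join-irreducibles, via x |-> {j in J | ~~ j <= x}.  Every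
   finite poset is obtained from the empty one by adding maximal elements one
   at a time, and adding a maximal element m to P is an expansion: for the
   cutting K = [a, \emptyset] with a = {p | ~~ p <= m} (every maximal chain
   contains the top \emptyset), S1 is empty and S0 consists of the maximal
   elements below m, so x_K is exactly m placed on top of its down-set. *)
From mathcomp Require Import all_boot all_order.
Set Implicit Arguments. Unset Strict Implicit. Unset Printing Implicit Defensive.
Import Order.TTheory.

Section FinitePartialOrder.
Variables (T : finType) (r : rel T).
Hypotheses (r_refl : reflexive r) (r_anti : antisymmetric r)
  (r_trans : transitive r).

Lemma card_down_lt x y :
  r x y -> x != y -> #|[set z | r z x]| < #|[set z | r z y]|.
Proof.
move=> rxy neq_xy; apply/proper_card/properP; split.
  by apply/subsetP => z; rewrite !inE => rzx; apply: r_trans rzx rxy.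
exists y; first by rewrite inE r_refl.
by rewrite inE; apply: contra neq_xy => ryx; apply/eqP/r_anti; rewrite rxy.
Qed.

Lemma strict_ind (P : T -> Prop) :
  (forall x, (forall y, r y x -> y != x -> P y) -> P x) -> forall x, P x.
Proof.
move=> IH x; have [N] := ubnP #|[set z | r z x]|.
elim: N x => // N IHN x lt_x_N; apply: IH => y ryx nyx; apply: IHN.
exact: leq_trans (card_down_lt ryx nyx) lt_x_N.
Qed.

Lemma exists_maximal (P : pred T) x : P x ->
  exists2 m, P m && r x m & forall y, P y -> r m y -> y = m.
Proof.
move=> Px; pose Q := [pred y | P y && r x y].
have [|m /andP[Pm rxm] max_m] := @arg_maxnP _ x Q (fun y => #|[set z | r z y]|).
  by rewrite /= Px r_refl.
exists m; first by rewrite Pm.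
move=> y Py rmy; apply/eqP; apply: contraT => nym.
have := max_m y; rewrite /= Py (r_trans rxm rmy) => /(_ isT).
by rewrite leqNgt card_down_lt // eq_sym.
Qed.

End FinitePartialOrder.

Section Filters.
Variables (n : nat) (le : rel 'I_n).

Lemma filterP (F : {set 'I_n}) :
  reflect (forall x y, x \in F -> le x y -> y \in F) (is_filter le F).
Proof.
apply: (iffP forallP) => [F_up x y Fx lxy | F_up x].
  by move/forallP/(_ y)/implyP: (F_up x); apply; rewrite Fx.
by apply/forallP => y; apply/implyP => /andP[]; apply: F_up.
Qed.

Lemma max_chain_set0 C : is_max_chain le C -> set0 \in C.
Proof.
case/andP=> /andP[/forall_inP C_filt /forall_inP C_tot] /forallP C_max.
have chain_C0 : is_chain le (set0 |: C).
  have filt0 : is_filter le set0 by apply/filterP => x y; rewrite inE.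
  apply/andP; split.
    by apply/forall_inP => A; rewrite in_setU1 => /predU1P[->|/C_filt].
  apply/forall_inP => A; rewrite in_setU1 => /predU1P[->|CA];
    apply/forall_inP => B; rewrite in_setU1 => /predU1P[->|CB];
    rewrite /Fle ?sub0set ?orbT //.
  exact: (forall_inP (C_tot A CA)).
have /implyP := C_max (set0 |: C); rewrite chain_C0 subsetUr => /(_ isT)/eqP <-.
exact: setU11.
Qed.

Lemma is_cutting_set0 a : is_filter le a -> is_cutting le a set0.
Proof.
move=> filt_a; apply/and4P; split; rewrite /Fle ?sub0set //.
  by apply/filterP => x y; rewrite inE.
apply/forallP => C; apply/implyP => /max_chain_set0 C0.
by apply/existsP; exists set0; rewrite C0 !sub0set.
Qed.

Hypotheses (le_refl : reflexive le) (le_anti : antisymmetric le)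
  (le_trans : transitive le).

Lemma below_S0 a : is_filter le a ->
  forall x, [exists s in S0 le a, le x s] = (x \notin a).
Proof.
move=> /filterP a_up x; apply/existsP/idP => [[s /andP[]]|xna].
  by rewrite inE => /andP[sna _] lxs; apply: contra sna => /a_up; apply.
have [s /andP[/= sna lxs] max_s] :=
  exists_maximal le_refl le_anti le_trans (P := [pred y | y \notin a]) xna.
exists s; rewrite lxs andbT inE sna /=; apply/forallP => y; apply/implyP => yna.
by apply/andP => -[nsy lsy]; rewrite (max_s y yna lsy) eqxx in nsy.
Qed.

End Filters.

Section OrderIso.
Variables (T : finType) (r : rel T).
Hypotheses (r_refl : reflexive r) (r_anti : antisymmetric r)
  (r_trans : transitive r).

Definition order_iso k (le : rel 'I_k) (g : 'I_k -> T) (A : {set T}) :=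
  [/\ injective g, codom g =i A & {mono g : i j / le i j >-> r i j}].

Lemma is_filter_not_below k (le : rel 'I_k) (g : 'I_k -> T) m :
  {mono g : i j / le i j >-> r i j} -> is_filter le [set i | ~~ r (g i) m].
Proof.
move=> g_mono; apply/filterP => i j; rewrite !inE -g_mono => nim lij.
by apply: contra nim; apply: r_trans.
Qed.

Definition ord_max_ext k (g : 'I_k -> T) (m : T) (i : 'I_k.+1) : T :=
  if unlift ord_max i is Some i' then g i' else m.

Lemma order_iso_add_maximal k (le : rel 'I_k) g A m :
  order_iso le g (A :\ m) -> m \in A ->
  (forall y, y \in A -> r m y -> y = m) ->
  order_iso (expand le [set i | ~~ r (g i) m] set0) (ord_max_ext g m) A.
Proof.
move=> [g_inj g_im g_mono] Am m_max.
have gA i : g i \in A :\ m by rewrite -g_im codom_f.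
have gm i : g i != m by have /setD1P[] := gA i.
have ext_lift i : ord_max_ext g m (lift ord_max i) = g i.
  by rewrite /ord_max_ext liftK.
have ext_max : ord_max_ext g m ord_max = m by rewrite /ord_max_ext unlift_none.
split.
- move=> i j; case: (unliftP ord_max i) => [i' ->|->];
    case: (unliftP ord_max j) => [j' ->|->]; rewrite ?ext_lift ?ext_max //.
  + by move/g_inj ->.
  + by move=> eq_im; have := gm i'; rewrite eq_im eqxx.
  + by move=> eq_mj; have := gm j'; rewrite -eq_mj eqxx.
- move=> x; apply/codomP/idP => [[i ->]|Ax].
    case: (unliftP ord_max i) => [i' ->|->]; rewrite ?ext_lift ?ext_max //.
    by have /setD1P[] := gA i'.
  have [-> | nxm] := eqVneq x m; first by exists ord_max.
  have /codomP[i ->] : x \in codom g by rewrite g_im; apply/setD1P.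
  by exists (lift ord_max i); rewrite ext_lift.
have le_refl : reflexive le by move=> i; rewrite -g_mono r_refl.
have le_anti : antisymmetric le.
  by move=> i j; rewrite -!g_mono => /r_anti/g_inj.
have le_trans : transitive le by move=> j i l; rewrite -!g_mono; apply: r_trans.
have below_m i : [exists s in S0 le [set i | ~~ r (g i) m], le i s] = r (g i) m.
  by rewrite below_S0 ?(is_filter_not_below m g_mono) // inE negbK.
have S1_set0 : S1 le set0 = set0 by apply/setP => s; rewrite !inE.
move=> i j; rewrite /expand.
case: (unliftP ord_max i) => [i' ->|->];
  case: (unliftP ord_max j) => [j' ->|->];
  rewrite ?liftK ?unlift_none ?ext_lift ?ext_max ?below_m ?S1_set0 ?r_refl //.
have /setD1P[gjm Agj] := gA j'.
apply/idP/existsP => [/(m_max _ Agj) eq_gj|[s]]; last by rewrite inE.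
by rewrite eq_gj eqxx in gjm.
Qed.

Lemma generated_order_iso k (A : {set T}) : #|A| = k ->
  exists (le : rel 'I_k) (g : 'I_k -> T), generated le /\ order_iso le g A.
Proof.
elim: k A => [|k IH] A cardA.
  exists [rel _ _ | true], (ffun0 (card_ord 0) : {ffun 'I_0 -> T}).
  split; first exact: gen0.
  split; try by case.
  by move=> x; rewrite (cards0_eq cardA) inE; apply/codomP => -[[]].
have [x0 Ax0] : exists x0, x0 \in A by apply/set0Pn; rewrite -card_gt0 cardA.
have [m /andP[/= Am _] m_max] :=
  exists_maximal r_refl r_anti r_trans (P := [pred y | y \in A]) Ax0.
have cardAm : #|A :\ m| = k.
  by move/eqP: cardA; rewrite (cardsD1 m) Am add1n eqSS => /eqP.
have [le [g [gen iso]]] := IH _ cardAm.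
exists (expand le [set i | ~~ r (g i) m] set0), (ord_max_ext g m); split.
  by case: iso => _ _ g_mono; apply/genS/is_cutting_set0/is_filter_not_below.
exact: order_iso_add_maximal.
Qed.

End OrderIso.

Section JoinIrreducible.
Variables (d : Order.disp_t) (L : finDistrLatticeType d).
Local Open Scope order_scope.

(* [L] need not have a [\bot]; the first conjunct says that [x] is not least. *)
Definition join_irr (x : L) : bool :=
  [exists z, ~~ (x <= z)] &&
  [forall u, forall v, (x == u `|` v) ==> (x == u) || (x == v)].

Lemma join_irr_leU j u v : join_irr j -> (j <= u `|` v) = (j <= u) || (j <= v).
Proof.
move=> /andP[_ /forallP/(_ (j `&` u))/forallP/(_ (j `&` v)) j_irr].
apply/idP/idP => [j_le_uv|]; last exact: lexU2.
move: j_irr; rewrite -meetUr meet_l // eqxx /=.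
by case/orP => /eqP ->; rewrite leIr ?orbT.
Qed.

Lemma le_by_join_irr x y :
  (forall j, join_irr j -> j <= x -> j <= y) -> x <= y.
Proof.
elim/(strict_ind (@lexx _ L) (@le_anti _ L) (@le_trans _ L)): x => x IH x_y.
have [x_irr|] := boolP (join_irr x); first exact: x_y.
rewrite negb_and => /orP[/existsPn x_least|]; first by rewrite -[x <= y]negbK.
case/forallPn => u /forallPn[v]; rewrite negb_imply negb_or.
case/and3P=> /eqP x_uv nxu nxv.
have ux : u <= x by rewrite x_uv leUl.
have vx : v <= x by rewrite x_uv leUr.
rewrite x_uv leUx !IH 1?eq_sym // => j j_irr jv; apply: x_y j_irr _;
  exact: le_trans jv _.
Qed.

Lemma le_bigjoin (I : finType) (P : pred I) (F : I -> L) (b : L) i :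
  P i -> F i <= \big[Order.join/b]_(k | P k) F k.
Proof.
by move=> Pi; rewrite (big_rem_AC _ _ _ _ (mem_index_enum i)) Pi leUl.
Qed.

Variable x0 : L.

Definition least : L := \big[Order.meet/x0]_(y : L) y.

Lemma least_le z : least <= z.
Proof. by rewrite /least (big_rem_AC _ _ _ _ (mem_index_enum z)) leIl. Qed.

Lemma join_irr_le_bigjoin (I : finType) (P : pred I) (F : I -> L) j :
  join_irr j -> j <= \big[Order.join/least]_(k | P k) F k ->
  exists2 k, P k & j <= F k.
Proof.
move=> j_irr; elim/big_rec: _ => [|k b Pk IHb].
  case/andP: j_irr => /existsP[z /negP j_z] _ j_least.
  by case: j_z; apply: le_trans j_least (least_le z).
by rewrite join_irr_leU // => /orP[j_Fk|/IHb//]; exists k.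
Qed.

Lemma iso_to_filters_join_irr n (le : rel 'I_n) (g : 'I_n -> L) :
  order_iso <=%O le g [set j | join_irr j] -> iso_to_filters L le.
Proof.
move=> [g_inj g_im g_mono].
pose f x := [set i | ~~ (g i <= x)].
have g_irr i : join_irr (g i) by have := g_im (g i); rewrite codom_f inE.
have f_mono x y : (x <= y) = Fle (f x) (f y).
  apply/idP/subsetP => [xy i|fy_fx].
    by rewrite !inE; apply: contra => gix; apply: le_trans gix xy.
  apply: le_by_join_irr => j j_irr jx.
  have /codomP[i eq_j] : j \in codom g by rewrite g_im inE.
  rewrite eq_j in jx *; apply/negPn/negP => ngy; have := fy_fx i.
  by rewrite !inE ngy jx => /(_ isT).
exists f; split => //.
- by move=> x y fxy; apply: le_anti; rewrite !f_mono fxy /Fle subxx.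
- exact: (fun x => is_filter_not_below (@le_trans _ L) x g_mono).
move=> F /filterP F_up; exists (\big[Order.join/least]_(i in ~: F) g i).
apply/setP => i; rewrite inE; have [iF|niF] := boolP (i \in F).
  apply/negP => /join_irr_le_bigjoin[// | j]; rewrite inE => njF.
  by rewrite g_mono => /(F_up _ _ iF); apply/negP.
by rewrite le_bigjoin // inE.
Qed.

End JoinIrreducible.

Theorem corollary2 (d : Order.disp_t) (L : finDistrLatticeType d)
  (hL : 1 < #|L|) :
  exists (n : nat) (le : rel 'I_n), generated le /\ iso_to_filters L le.
Proof.
have /card_gt0P[x0 _] := ltnW hL.
have [le [g [gen iso]]] := generated_order_iso (@lexx _ L) (@le_anti _ L)
  (@le_trans _ L) (erefl #|[set j : L | join_irr j]|).
by exists _, le; split; last exact: (iso_to_filters_join_irr x0 iso).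
Qed.
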